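(* Let $\mathcal{F}:\mathcal{T}^Y\to\mathcal{T}^Z$ be a (holomorphic, projective) cover between trees of spheres with portrait $\mathbf{F}$ and of degree $D$. Let $v$ be an internal vertex of $T^Y$ with $\deg(v)=D$, and let $(f_n,y_n,z_n)_n$ be a sequence of rational maps marked by $\mathbf{F}$ converging to $\mathcal{F}$ via $(\phi^Y_n,\phi^Z_n)$. Then $\phi^Z_{n,F(v)}\circ f_n\circ(\phi^Y_{n,v})^{-1}:\mathbb{S}_v\to\mathbb{S}_{F(v)}$ converges uniformly on $\mathbb{S}_v$ to $f_v$.
   Context: Trees: finite connected graphs without cycles (vertices $V$, edges $2$-element subsets, $E_v$ the edges at $v$); leaves have valence $1$, the others are internal ($IV$); trees are stable (internal vertices have valence $\ge3$). For $e\in E_v$, $B_v(e)$ is the component of the tree minus $v$ containing $e$. A projective tree of spheres $\mathcal{T}^X$ marked by a finite set $X$ ($\ge3$ elements) is a tree $T^X$ with leaf set $X$ and, for each internal vertex $v$, a sphere $\mathbb{S}_v$ with a projective structure and an injection $i_v:E_v\to\mathbb{S}_v$; $X_v=i_v(E_v)$; $a_v(x)=i_v(e)$ for $x\in B_v(e)$. A holomorphic cover $\mathcal{F}:\mathcal{T}^Y\to\mathcal{T}^Z$: a map $F:T^Y\to T^Z$ sending vertices to vertices and edges $\{v,w\}$ to edges $\{F(v),F(w)\}$, $Y$ into $Z$ and $IV^Y$ into $IV^Z$, with holomorphic branched coverings $f_v:\mathbb{S}_v\to\mathbb{S}_{F(v)}$ ($v\in IV^Y$) which restrict to coverings $\mathbb{S}_v\setminus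 Y_v\to\mathbb{S}_{F(v)}\setminus Z_{F(v)}$, satisfy $f_v\circ i_v=i_{F(v)}\circ F$ on $E_v$, and have equal local degrees at both attaching points of an edge between internal vertices. $\deg(v)=\deg f_v$; for a leaf $y$ attached to internal $v$ by $e$, $\deg(y)=\deg_{i_v(e)}f_v$. The degree $D$ is $\sum_{v'\in F^{-1}(w)}\deg(v')$, independent of the vertex $w$. The portrait of $\mathcal{F}$ is $(F|_Y,\deg|_Y)$. A portrait of degree $D$ is $\mathbf{F}=(F,\deg)$, $F:Y\to Z$, $\deg:Y\to\mathbb{N}\setminus\{0\}$ with $\sum_{a\in Y}(\deg(a)-1)=2D-2$ and $\sum_{a\in F^{-1}(b)}\deg(a)=D$ for all $b\in Z$. A rational map marked by $\mathbf{F}$ is $(f,y,z)$ with $f$ rational of degree $D$, $y:Y\to\hat{\mathbb{C}}$ and $z:Z\to\hat{\mathbb{C}}$ injective, $f\circ y=z\circ F$ and $\deg_{y(a)}f=\deg(a)$. Convergence: $(f_n,y_n,z_n)\to\mathcal{F}$ via $(\phi^Y_n,\phi^Z_n)$ if the $(f_n,y_n,z_n)$ are marked by the portrait of $\mathcal{F}$ and for each $v\in IV^Y$, $w=F(v)$, there are projective isomorphisms $\phi^Y_{n,v}:\hat{\mathbb{C}}\to\mathbb{S}_v$, $\phi^Z_{n,w}:\hat{\mathbb{C}}\to\mathbb{S}_w$ with $\phi^Y_{n,v}\circ y_n\to a^Y_v$, $\phi^Z_{n,w}\circ z_n\to a^Z_w$, and $\phi^Z_{n,w}\circ f_n\circ(\phi^Y_{n,v})^{-1}\to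 f_v$ locally uniformly on $\mathbb{S}_v\setminus Y_v$. *)

From HB Require Import structures.
From mathcomp Require Import all_boot all_order all_algebra.
From mathcomp Require Import complex reals.
Set Implicit Arguments. Unset Strict Implicit. Unset Printing Implicit Defensive.
Import Order.TTheory GRing.Theory Num.Theory.
Local Open Scope ring_scope.

Section Sphere.
Variable R : realType.
Local Notation C := (R[i]).

(* The Riemann sphere: None is the point at infinity. *)
Definition sphere := option C.

Definition nsq (z : C) : R := (@complex.Re R z) ^+ 2 + (@complex.Im R z) ^+ 2.

Definition chord (a b : sphere) : R :=
  match a, b with
  | Some z, Some w => 2 * Num.sqrt (nsq (z - w)) / Num.sqrt ((1 + nsq z) * (1 + nsq w))
  | Some z, None | None, Some z => 2 / Num.sqrt (1 + nsq z)
  | None, None => 0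
  end.

(* A rational map is given by a pair (numerator, denominator). *)
Definition ratmap := ({poly C} * {poly C})%type.

Definition rdeg (m : ratmap) : nat := (maxn (size m.1) (size m.2)).-1.

Definition is_ratmap (m : ratmap) : bool := coprimep m.1 m.2 && (0 < rdeg m)%N.

(* t^D p(1/t), D = rdeg m : the chart at infinity *)
Definition revp (m : ratmap) (p : {poly C}) : {poly C} :=
  \poly_(k < (rdeg m).+1) p`_(rdeg m - k).

Definition ev_fin (p q : {poly C}) (z : C) : sphere :=
  if q.[z] != 0 then Some (p.[z] / q.[z]) else None.

Definition ev (m : ratmap) (s : sphere) : sphere :=
  match s with
  | Some z => ev_fin m.1 m.2 z
  | None => ev_fin (revp m m.1) (revp m m.2) 0
  end.

Definition ldeg_fin (p q : {poly C}) (z : C) : nat :=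
  match ev_fin p q z with
  | Some w => mup z (p - w%:P * q)
  | None => mup z q
  end.

Definition ldeg (m : ratmap) (s : sphere) : nat :=
  match s with
  | Some z => ldeg_fin m.1 m.2 z
  | None => ldeg_fin (revp m m.1) (revp m m.2) 0
  end.

(* projective isomorphisms of the sphere = Moebius maps = rational maps of degree 1 *)
Definition is_mobius (m : ratmap) : bool := is_ratmap m && (rdeg m == 1%N).

(* inverse of z |-> (a z + b) / (c z + d) is z |-> (d z - b) / (- c z + a) *)
Definition mobinv (m : ratmap) : ratmap :=
  let a := m.1`_1 in let b := m.1`_0 in let c := m.2`_1 in let d := m.2`_0 in
  (d *: 'X - b%:P, (- c) *: 'X + a%:P).

Definition sconv (u : nat -> sphere) (l : sphere) : Prop :=
  forall eps : R, 0 < eps -> exists N, forall n, (N <= n)%N -> chord (u n) l < eps.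

Definition unif_conv (g : nat -> sphere -> sphere) (f : sphere -> sphere) : Prop :=
  forall eps : R, 0 < eps -> exists N, forall n, (N <= n)%N ->
    forall s, chord (g n s) (f s) < eps.

Definition loc_unif_conv_off (A : sphere -> Prop)
    (g : nat -> sphere -> sphere) (f : sphere -> sphere) : Prop :=
  forall p, ~ A p -> exists2 r : R, 0 < r &
    forall eps : R, 0 < eps -> exists N, forall n, (N <= n)%N ->
      forall s, chord s p < r -> chord (g n s) (f s) < eps.

End Sphere.

Definition is_tree (V : finType) (e : rel V) : Prop :=
  [/\ symmetric e, irreflexive e, (forall a b, connect e a b) &
      (forall s : seq V, uniq s -> (3 <= size s)%N -> ~~ cycle e s)].

Definition valence (V : finType) (e : rel V) (a : V) : nat := #|[set b | e a b]|.

Definition in_branch (V : finType) (e : rel V) (v u x : V) : bool :=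
  connect [rel a b | e a b && (a != v) && (b != v)] u x.

(* A projective tree of spheres marked by X: vertices are X + I
   (inl = leaves, labelled by X; inr = internal vertices), every sphere
   S_v is the Riemann sphere with its standard projective structure;
   att v u = i_v({v,u}) is the attaching point of the edge {v,u} in S_v. *)
Definition is_sphere_tree (R : realType) (X I : finType) (e : rel (X + I))
    (att : I -> X + I -> sphere R) : Prop :=
  [/\ is_tree e, (3 <= #|X|)%N,
      (forall x : X, valence e (inl x) = 1%N),
      (forall v : I, (3 <= valence e (inr v))%N) &
      (forall v : I, forall u u', e (inr v) u -> e (inr v) u' ->
          att v u = att v u' -> u = u')].

Definition marked_pts (R : realType) (X I : finType) (e : rel (X + I))
    (att : I -> X + I -> sphere R) (v : I) (s : sphere R) : Prop :=
  exists2 u, e (inr v) u & s = att v u.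

Definition vmap (Y Z IY IZ : finType) (FY : Y -> Z) (FI : IY -> IZ)
    (a : Y + IY) : Z + IZ :=
  match a with inl y => inl (FY y) | inr v => inr (FI v) end.

Definition vdeg (R : realType) (Y IY : finType) (fv : IY -> ratmap R)
    (dY : Y -> nat) (a : Y + IY) : nat :=
  match a with inl y => dY y | inr v => rdeg (fv v) end.

(* Holomorphic cover F : T^Y -> T^Z of degree D with portrait (FY, dY).
   The map on vertices is vmap FY FI (sends leaves to leaves, internal
   vertices to internal vertices); fv v : S_v -> S_{F v} is a rational map;
   dY y = deg(y) is the local degree at the attaching point of the leaf y. *)
Definition is_cover (R : realType) (Y IY Z IZ : finType)
    (eY : rel (Y + IY)) (attY : IY -> Y + IY -> sphere R)
    (eZ : rel (Z + IZ)) (attZ : IZ -> Z + IZ -> sphere R)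
    (FY : Y -> Z) (FI : IY -> IZ) (fv : IY -> ratmap R) (dY : Y -> nat)
    (D : nat) : Prop :=
  let F := vmap FY FI in
  [/\ (forall a b, eY a b -> eZ (F a) (F b)),
      (forall v, is_ratmap (fv v)) &
    [/\
      (* f_v restricts to a covering S_v \ Y_v -> S_{F v} \ Z_{F v} *)
      (forall v s, marked_pts eZ attZ (FI v) (ev (fv v) s) <-> marked_pts eY attY v s),
      (forall v s, ~ marked_pts eY attY v s -> ldeg (fv v) s = 1%N) &
    [/\
      (forall v u, eY (inr v) u -> ev (fv v) (attY v u) = attZ (FI v) (F u)),
      (forall v w, eY (inr v) (inr w) ->
          ldeg (fv v) (attY v (inr w)) = ldeg (fv w) (attY w (inr v))),
      (forall y v, eY (inl y) (inr v) -> dY y = ldeg (fv v) (attY v (inl y))) &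
      (forall w : Z + IZ, (\sum_(a | F a == w) vdeg fv dY a)%N = D)]]].

Definition marked_by (R : realType) (Y Z : finType) (FY : Y -> Z) (dY : Y -> nat)
    (D : nat) (f : ratmap R) (y : Y -> sphere R) (z : Z -> sphere R) : Prop :=
  [/\ is_ratmap f, rdeg f = D, injective y, injective z &
      (forall a, ev f (y a) = z (FY a) /\ ldeg f (y a) = dY a)].

Definition converges_to (R : realType) (Y IY Z IZ : finType)
    (eY : rel (Y + IY)) (attY : IY -> Y + IY -> sphere R)
    (eZ : rel (Z + IZ)) (attZ : IZ -> Z + IZ -> sphere R)
    (FY : Y -> Z) (FI : IY -> IZ) (fv : IY -> ratmap R) (dY : Y -> nat) (D : nat)
    (f : nat -> ratmap R) (y : nat -> Y -> sphere R) (z : nat -> Z -> sphere R)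
    (phiY : nat -> IY -> ratmap R) (phiZ : nat -> IZ -> ratmap R) : Prop :=
  (forall n, marked_by FY dY D (f n) (y n) (z n)) /\
  forall v : IY, let w := FI v in
  [/\ (forall n, is_mobius (phiY n v)), (forall n, is_mobius (phiZ n w)),
      (forall (a : Y) u, eY (inr v) u -> in_branch eY (inr v) u (inl a) ->
          sconv (fun n => ev (phiY n v) (y n a)) (attY v u)),
      (forall (b : Z) u, eZ (inr w) u -> in_branch eZ (inr w) u (inl b) ->
          sconv (fun n => ev (phiZ n w) (z n b)) (attZ w u)) &
      loc_unif_conv_off (marked_pts eY attY v)
        (fun n s => ev (phiZ n w) (ev (f n) (ev (mobinv (phiY n v)) s)))
        (ev (fv v))].

(* In homogeneous coordinates [x : y] a rational map of degree D is a pair of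
   binary forms of degree D without common zero, determined up to a scalar by
   its values at 2D + 1 points.  The maps g_n = phi^Z_n o f_n o (phi^Y_n)^-1
   have degree D and converge to f_v at 2D + 1 points chosen off the attaching
   points of v and off the poles of f_v.  The normalised solutions of the
   interpolation linear system, whose limit is invertible, therefore give forms
   of g_n whose coefficients converge to those of a form of f_v.  As the limit
   forms have no common zero, |A| + |B| is bounded below on normalised lifts of
   the points of the sphere, and coefficient convergence becomes uniform
   chordal convergence. *)

From HB Require Import structures.
From mathcomp Require Import all_boot all_order all_algebra.
From mathcomp Require Import complex reals.
From mathcomp Require Import ring lra zify.
Set Implicit Arguments. Unset Strict Implicit. Unset Printing Implicit Defensive.
Import Order.TTheory GRing.Theory Num.Theory.
Import ComplexField.Normc.
Local Open Scope ring_scope.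

Section HomogeneousForms.
Variable R : realType.
Local Notation C := (R[i]).
Implicit Types (P Q l : {poly C}) (x y : C).

Definition hpoint (a b : C) : sphere R := if b != 0 then Some (a / b) else None.

Lemma hpointZ (l a b : C) : l != 0 -> hpoint (l * a) (l * b) = hpoint a b.
Proof.
move=> l0; rewrite /hpoint mulf_eq0 negb_or l0 /=.
by case: ifP => // _; rewrite invfM mulrACA divff // mul1r.
Qed.

Lemma hpoint_eq_Some (a b u : C) : hpoint a b = Some u -> a - u * b = 0.
Proof. by rewrite /hpoint; case: ifP => // b0 [<-]; rewrite divfK ?subrr. Qed.

Definition homog (d : nat) P x y : C := \sum_(k < d.+1) P`_k * x ^+ k * y ^+ (d - k).

Lemma homog_y1 d P x : (size P <= d.+1)%N -> homog d P x 1 = P.[x].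
Proof.
move=> hs; rewrite /homog (horner_coef_wide _ hs); apply: eq_bigr => k _.
by rewrite expr1n mulr1.
Qed.

Lemma homog_y0 d P x : homog d P x 0 = P`_d * x ^+ d.
Proof.
rewrite /homog big_ord_recr /= subnn expr0 mulr1 big1 ?add0r // => k _.
by rewrite expr0n subn_eq0 leqNgt ltn_ord /= mulr0.
Qed.

Lemma homog_x1 d P y : homog d P 1 y = (\poly_(k < d.+1) P`_(d - k)).[y].
Proof.
rewrite (horner_coef_wide _ (size_poly _ _)) /homog (reindex_inj rev_ord_inj) /=.
apply: eq_bigr => k _; rewrite coef_poly ltn_ord expr1n mulr1.
by rewrite subKn // -ltnS.
Qed.

Lemma homog_scale d P (l : C) x y : homog d P (l * x) (l * y) = l ^+ d * homog d P x y.
Proof.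
rewrite /homog mulr_sumr; apply: eq_bigr => k _.
have e : l ^+ d = l ^+ k * l ^+ (d - k) by rewrite -exprD subnKC // -ltnS.
by rewrite !exprMn e; ring.
Qed.

Lemma homog_div d P x y : (size P <= d.+1)%N -> y != 0 ->
  homog d P x y = y ^+ d * P.[x / y].
Proof.
move=> hs y0; rewrite -(homog_y1 _ hs) -homog_scale.
by rewrite mulr1 mulrC divfK.
Qed.

Lemma homogD d P Q x y : homog d (P + Q) x y = homog d P x y + homog d Q x y.
Proof.
by rewrite /homog -big_split; apply: eq_bigr => k _; rewrite coefD !mulrDl.
Qed.

Lemma homogZ d (a : C) P x y : homog d (a *: P) x y = a * homog d P x y.
Proof.
by rewrite /homog mulr_sumr; apply: eq_bigr => k _; rewrite coefZ !mulrA.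
Qed.

Lemma homogB d P Q x y : homog d (P - Q) x y = homog d P x y - homog d Q x y.
Proof. by rewrite homogD -scaleN1r homogZ mulN1r. Qed.

Lemma homog_sum d n (F : 'I_n -> {poly C}) x y :
  homog d (\sum_(i < n) F i) x y = \sum_(i < n) homog d (F i) x y.
Proof.
rewrite /homog exchange_big /=; apply: eq_bigr => k _.
by rewrite coef_sum !mulr_suml.
Qed.

Lemma coefM_top P Q a b : (size P <= a.+1)%N -> (size Q <= b.+1)%N ->
  (P * Q)`_(a + b) = P`_a * Q`_b.
Proof.
move=> hP hQ; rewrite coefM.
have ha : (a < (a + b).+1)%N by rewrite ltnS leq_addr.
rewrite (bigD1 (Ordinal ha)) //= addKn big1 ?addr0 // => i /eqP ne.
have [lt|gt] := ltnP i a.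
  rewrite [Q`_ _]nth_default ?mulr0 //.
  by apply: leq_trans hQ _; have := ltn_ord i; lia.
rewrite [P`_ _]nth_default ?mul0r //; apply: leq_trans hP _.
by rewrite ltn_neqAle gt andbT eq_sym; apply/eqP => e; apply: ne; apply: val_inj.
Qed.

Lemma homogM a b P Q x y : (size P <= a.+1)%N -> (size Q <= b.+1)%N ->
  homog (a + b) (P * Q) x y = homog a P x y * homog b Q x y.
Proof.
move=> hP hQ.
have hPQ : (size (P * Q)%R <= (a + b).+1)%N by have := size_polyMleq P Q; lia.
have [->|y0] := eqVneq y 0; first by rewrite !homog_y0 coefM_top // exprD; ring.
by rewrite !homog_div // hornerM exprD; ring.
Qed.

Lemma homog_deg1 P x y : homog 1 P x y = P`_0 * y + P`_1 * x.
Proof. by rewrite /homog !big_ord_recr big_ord0 /= add0r !expr0 !expr1 !mulr1. Qed.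

Lemma size_exp_linear l n : (size l <= 2)%N -> (size (l ^+ n) <= n.+1)%N.
Proof.
move=> hl; apply: leq_trans (size_poly_exp_leq _ _) _; rewrite ltnS.
by case: (size l) hl => [|[|[|]]] //= _; rewrite ?mul0n ?mul1n.
Qed.

Lemma homog_exp_linear n l x y : (size l <= 2)%N ->
  homog n (l ^+ n) x y = homog 1 l x y ^+ n.
Proof.
move=> hl; elim: n => [|n IH]; first by rewrite /homog big_ord1 !expr0 coefC /= !mulr1.
have hn := size_exp_linear n hl.
by rewrite [in RHS]exprSr -IH -homogM // addn1 exprSr.
Qed.

Definition hsubst d P l1 l2 : {poly C} :=
  \sum_(k < d.+1) P`_k *: (l1 ^+ k * l2 ^+ (d - k)).

Lemma size_hsubst d P l1 l2 : (size l1 <= 2)%N -> (size l2 <= 2)%N ->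
  (size (hsubst d P l1 l2) <= d.+1)%N.
Proof.
move=> h1 h2; apply: leq_trans (size_sum _ _ _) _; apply/bigmax_leqP => k _.
apply: leq_trans (size_scale_leq _ _) _; apply: leq_trans (size_polyMleq _ _) _.
have := size_exp_linear k h1; have := size_exp_linear (d - k) h2.
have := ltn_ord k; lia.
Qed.

Lemma homog_hsubst d P l1 l2 x y : (size l1 <= 2)%N -> (size l2 <= 2)%N ->
  homog d (hsubst d P l1 l2) x y = homog d P (homog 1 l1 x y) (homog 1 l2 x y).
Proof.
move=> h1 h2; rewrite /hsubst homog_sum [in RHS]/homog; apply: eq_bigr => k _.
have kd : (k <= d)%N by rewrite -ltnS.
have hM := homogM x y (size_exp_linear k h1) (size_exp_linear (d - k) h2).
rewrite subnKC // in hM.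
by rewrite homogZ hM (homog_exp_linear k x y h1) (homog_exp_linear _ x y h2) mulrA.
Qed.

End HomogeneousForms.

Section RatmapHomogeneous.
Variable R : realType.
Local Notation C := (R[i]).
Implicit Types (m : ratmap R) (x y : C).

Lemma size_num_rdeg m : (size m.1 <= (rdeg m).+1)%N.
Proof. by rewrite /rdeg; have := leq_maxl (size m.1) (size m.2); lia. Qed.

Lemma size_den_rdeg m : (size m.2 <= (rdeg m).+1)%N.
Proof. by rewrite /rdeg; have := leq_maxr (size m.1) (size m.2); lia. Qed.

Lemma maxn_size_rdeg m : (0 < rdeg m)%N -> maxn (size m.1) (size m.2) = (rdeg m).+1.
Proof. by rewrite /rdeg; case: (maxn _ _). Qed.

Lemma ev_hpoint m x y : (x != 0) || (y != 0) ->
  ev m (hpoint x y) = hpoint (homog (rdeg m) m.1 x y) (homog (rdeg m) m.2 x y).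
Proof.
have [->|y0] := eqVneq y 0 => /= [|_]; last first.
  rewrite /hpoint y0 /= -/(ev_fin m.1 m.2 (x / y)) /ev_fin.
  rewrite !homog_div ?size_num_rdeg ?size_den_rdeg // -/(hpoint _ _).
  by rewrite -[RHS]/(hpoint _ _) hpointZ // expf_neq0.
rewrite orbF => x0; rewrite /hpoint eqxx /= -/(hpoint _ _) /ev_fin !horner_coef0.
rewrite /revp !coef_poly /= subn0 !homog_y0 -/(hpoint _ _) -[RHS]/(hpoint _ _).
by rewrite ![_ * x ^+ _]mulrC hpointZ // expf_neq0.
Qed.

Lemma homog_ratmap_neq0 m x y : is_ratmap m -> (x != 0) || (y != 0) ->
  (homog (rdeg m) m.1 x y != 0) || (homog (rdeg m) m.2 x y != 0).
Proof.
case/andP=> cop hr; have [->|y0] := eqVneq y 0 => /= [|_].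
  rewrite orbF => x0; rewrite !homog_y0 !mulf_eq0 !negb_or !expf_neq0 // !andbT.
  have hM := maxn_size_rdeg hr.
  have top_neq0 (p : {poly C}) : size p = (rdeg m).+1 -> p`_(rdeg m) != 0.
    move=> sp; have := lead_coef_eq0 p; rewrite lead_coefE sp /= => ->.
    by rewrite -size_poly_eq0 sp.
  case/orP: (leq_total (size m.2) (size m.1)) => h.
    by apply/orP; left; apply: top_neq0; rewrite -hM; apply/esym/maxn_idPl.
  by apply/orP; right; apply: top_neq0; rewrite -hM; apply/esym/maxn_idPr.
rewrite !homog_div ?size_num_rdeg ?size_den_rdeg // !mulf_eq0 !negb_or !expf_neq0 //=.
have [hz|] //= := eqVneq m.1.[x / y] 0.
by rewrite (coprimep_root cop) //; apply/eqP.
Qed.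

Definition homog_map (D : nat) (g : sphere R -> sphere R) : Prop :=
  exists A B : {poly C}, [/\ (size A <= D.+1)%N, (size B <= D.+1)%N &
    forall x y, (x != 0) || (y != 0) ->
      g (hpoint x y) = hpoint (homog D A x y) (homog D B x y) /\
      ((homog D A x y != 0) || (homog D B x y != 0))].

End RatmapHomogeneous.

Section Mobius.
Variable R : realType.
Local Notation C := (R[i]).
Implicit Types (m : ratmap R) (x y : C).

Local Notation mA m := (m.1`_1).
Local Notation mB m := (m.1`_0).
Local Notation mC m := (m.2`_1).
Local Notation mD m := (m.2`_0).

Lemma mobius_det_neq0 m : is_mobius m -> mA m * mD m - mB m * mC m != 0.
Proof.
case/andP=> hm /eqP r1; apply/eqP => det0.
have no_common_zero x y : (x != 0) || (y != 0) ->
    mB m * y + mA m * x = 0 -> mD m * y + mC m * x = 0 -> False.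
  move=> xy e1 e2; have := homog_ratmap_neq0 hm xy.
  by rewrite r1 !homog_deg1 e1 e2 eqxx.
have [cd|] := boolP ((mD m != 0) || (mC m != 0)).
  apply: (no_common_zero (mD m) (- mC m)); first by rewrite oppr_eq0.
    by rewrite -[RHS]det0; ring.
  by ring.
rewrite negb_or !negbK => /andP[/eqP d0 /eqP c0].
have [a0|a0] := eqVneq (mA m) 0.
  apply: (no_common_zero 1 0); first by rewrite oner_eq0.
    by rewrite a0; ring.
  by rewrite c0; ring.
apply: (no_common_zero (mB m) (- mA m)); first by rewrite oppr_eq0 a0 orbT.
  by ring.
by rewrite c0 d0; ring.
Qed.

Lemma mobinvE m : mobinv m = (mD m *: 'X + (- mB m)%:P, (- mC m) *: 'X + (mA m)%:P).
Proof. by rewrite /mobinv polyCN. Qed.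

Lemma size_linear (u v : C) : (size (u *: 'X + v%:P)%R <= 2)%N.
Proof.
apply: leq_trans (size_polyD _ _) _; rewrite geq_max.
rewrite (leq_trans (size_scale_leq _ _)) ?size_polyX //.
by rewrite (leq_trans (size_polyC_leq1 _)).
Qed.

Lemma size_linear_eq2 (u v : C) : u != 0 -> size (u *: 'X + v%:P) = 2%N.
Proof.
move=> u0; apply/eqP; rewrite eqn_leq size_linear /=.
have : (u *: 'X + v%:P)`_1 != 0 by rewrite coefD coefZ coefX coefC /= mulr1 addr0.
by apply: contraR; rewrite -leqNgt => h; rewrite nth_default.
Qed.

Lemma rdeg_mobinv m : is_mobius m -> rdeg (mobinv m) = 1%N.
Proof.
move=> hm; have det := mobius_det_neq0 hm; rewrite mobinvE /rdeg /=.
have s1 := size_linear (mD m) (- mB m); have s2 := size_linear (- mC m) (mA m).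
have [d0|d0] := eqVneq (mD m) 0; last by rewrite size_linear_eq2 // (maxn_idPl s2).
have [c0|c0] := eqVneq (mC m) 0; first by move: det; rewrite d0 c0 !mulr0 subrr eqxx.
by rewrite (size_linear_eq2 _ (_ : - mC m != 0)) ?oppr_eq0 // (maxn_idPr s1).
Qed.

Lemma homog_mobinv_neq0 m x y : is_mobius m -> (x != 0) || (y != 0) ->
  (homog 1 (mobinv m).1 x y != 0) || (homog 1 (mobinv m).2 x y != 0).
Proof.
move=> hm; apply: contraTT; rewrite !homog_deg1 mobinvE /=.
rewrite !coefD !coefZ !coefX !coefC /= !mulr0 !mulr1 !add0r !addr0.
rewrite !negb_or !negbK => /andP[/eqP e1 /eqP e2].
have det := mobius_det_neq0 hm.
have ex : (mA m * mD m - mB m * mC m) * x = 0.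
  have -> : (mA m * mD m - mB m * mC m) * x =
      mA m * (- mB m * y + mD m * x) + mB m * (mA m * y + - mC m * x) by ring.
  by rewrite e1 e2; ring.
have ey : (mA m * mD m - mB m * mC m) * y = 0.
  have -> : (mA m * mD m - mB m * mC m) * y =
      mC m * (- mB m * y + mD m * x) + mD m * (mA m * y + - mC m * x) by ring.
  by rewrite e1 e2; ring.
move/eqP: ex; move/eqP: ey; rewrite !mulf_eq0 (negPf det) /= => /eqP -> /eqP ->.
by rewrite eqxx.
Qed.

Lemma homog_map_mobius_conj (phi1 f phi2 : ratmap R) :
  is_mobius phi1 -> is_ratmap f -> is_mobius phi2 ->
  homog_map (rdeg f) (fun s => ev phi2 (ev f (ev (mobinv phi1) s))).
Proof.
move=> h1 hf h2; have r1 := rdeg_mobinv h1.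
have [hr2 /eqP r2] := andP h2.
set l1 := (mobinv phi1).1; set l2 := (mobinv phi1).2.
have s1 : (size l1 <= 2)%N by rewrite -r1 size_num_rdeg.
have s2 : (size l2 <= 2)%N by rewrite -r1 size_den_rdeg.
set d := rdeg f; set S1 := hsubst d f.1 l1 l2; set S2 := hsubst d f.2 l1 l2.
have size_comb (a b : C) : (size (a *: S1 + b *: S2)%R <= d.+1)%N.
  apply: leq_trans (size_polyD _ _) _; rewrite geq_max.
  by rewrite !(leq_trans (size_scale_leq _ _)) ?size_hsubst.
exists (mA phi2 *: S1 + mB phi2 *: S2), (mC phi2 *: S1 + mD phi2 *: S2).
split=> // x y xy.
set F1 := homog d f.1 (homog 1 l1 x y) (homog 1 l2 x y).
set F2 := homog d f.2 (homog 1 l1 x y) (homog 1 l2 x y).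
have -> : homog d (mA phi2 *: S1 + mB phi2 *: S2) x y = mB phi2 * F2 + mA phi2 * F1.
  by rewrite homogD !homogZ !homog_hsubst // addrC.
have -> : homog d (mC phi2 *: S1 + mD phi2 *: S2) x y = mD phi2 * F2 + mC phi2 * F1.
  by rewrite homogD !homogZ !homog_hsubst // addrC.
have n1 := homog_mobinv_neq0 h1 xy; have n2 := homog_ratmap_neq0 hf n1.
have n3 := homog_ratmap_neq0 hr2 n2; rewrite r2 -/F1 -/F2 !homog_deg1 in n3.
rewrite ev_hpoint // r1 (ev_hpoint _ n1) (ev_hpoint _ n2) r2 -/F1 -/F2.
by rewrite !homog_deg1.
Qed.

End Mobius.

Section Interpolation.
Variable R : realType.
Local Notation C := (R[i]).
Implicit Types (p q a b : {poly C}).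

Lemma coprimep_maxn_neq0 p q D : coprimep p q -> maxn (size p) (size q) = D.+1 ->
  (0 < D)%N -> p != 0 /\ q != 0.
Proof.
move=> cop hM D0; split; apply/eqP => z0; move: cop hM; rewrite z0.
  by rewrite coprime0p -size_poly_eq1 size_poly0 => /eqP ->; case=> e; rewrite -e in D0.
by rewrite coprimep0 -size_poly_eq1 size_poly0 maxn0 => /eqP ->; case=> e; rewrite -e in D0.
Qed.

Lemma coprimep_interp_unique p q a b (D : nat) (zs : seq C) :
  coprimep p q -> maxn (size p) (size q) = D.+1 -> (0 < D)%N ->
  (size a <= D.+1)%N -> (size b <= D.+1)%N ->
  uniq zs -> size zs = (D + D).+1 ->
  (forall z, z \in zs -> a.[z] * q.[z] = b.[z] * p.[z]) ->
  exists k : C, a = k *: p /\ b = k *: q.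
Proof.
move=> cop hM D0 ha hb uz sz hz.
have [p0 q0] := coprimep_maxn_neq0 cop hM D0.
have sp : (size p <= D.+1)%N by rewrite -hM leq_maxl.
have sq : (size q <= D.+1)%N by rewrite -hM leq_maxr.
have e : a * q = b * p.
  apply/eqP; rewrite -subr_eq0; apply/negPn/negP => ne.
  have hr : all (root (a * q - b * p)) zs.
    by apply/allP => z hz'; rewrite /root hornerD hornerN !hornerM hz // subrr.
  have := max_poly_roots ne hr uz; rewrite sz ltnNge => /negP; apply.
  apply: leq_trans (size_polyD _ _) _; rewrite size_polyN geq_max.
  have s1 := size_polyMleq a q; have s2 := size_polyMleq b p.
  by apply/andP; split; [apply: leq_trans s1 _ | apply: leq_trans s2 _]; lia.
have /dvdpP[k ek] : p %| a by rewrite -(Gauss_dvdpl _ cop) e dvdp_mull.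
have eb : b = k * q by apply: (mulIf p0); rewrite -e ek mulrAC.
have [k0|k0] := eqVneq k 0; first by exists 0; rewrite ek eb k0 !mul0r !scale0r.
have sk : (size k <= 1)%N.
  move: (size_mul k0 p0) (size_mul k0 q0) ha hb hM; rewrite -ek -eb.
  by move: (size k) (size p) (size q) (size a) (size b) => n1 n2 n3 n4 n5; lia.
by exists k`_0; rewrite ek eb {1 3}(size1_polyC sk) !mul_polyC.
Qed.

Lemma exists_natr_notin (L : seq C) : exists k : nat, (k%:R : C) \notin L.
Proof.
have [/forallP inL|/forallPn[k hk]] :=
  boolP [forall k : 'I_(size L).+1, (k%:R : C) \in L]; last by exists k.
suff : ((size L).+1 <= size L)%N by rewrite ltnn.
rewrite -[X in (X <= _)%N](size_iota 0) -(size_map (fun k : nat => k%:R : C)).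
apply: uniq_leq_size.
  by rewrite map_inj_uniq ?iota_uniq // => m n /eqP; rewrite eqr_nat => /eqP.
move=> z /mapP[k]; rewrite mem_iota add0n => /andP[_ hk] ->.
exact: (inL (Ordinal hk)).
Qed.

Lemma exists_fresh_nonroots (L : seq C) (Q : {poly C}) n : Q != 0 ->
  exists zs : seq C, [/\ size zs = n, uniq zs &
    forall z, z \in zs -> (z \notin L) && (Q.[z] != 0)].
Proof.
move=> Q0; have [rs ers] := closed_field_poly_normal Q.
have nonroot z : z \notin rs -> Q.[z] != 0.
  rewrite ers hornerZ mulf_eq0 negb_or lead_coef_eq0 Q0 /=.
  by have := root_prod_XsubC rs z; rewrite /root => ->.
elim: n => [|n [zs [sz uz hz]]]; first by exists [::].
have [k] := exists_natr_notin (L ++ zs ++ rs); rewrite !mem_cat !negb_or.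
case/and3P=> hL hzs hrs; exists (k%:R :: zs); split; rewrite /= ?sz ?hzs //.
by move=> z; rewrite in_cons => /predU1P[->|/hz //]; rewrite hL nonroot.
Qed.

End Interpolation.

Lemma eventually_forall_fin (I : finType) (P : I -> nat -> Prop) :
  (forall i N M, (N <= M)%N -> P i N -> P i M) -> (forall i, exists N, P i N) ->
  exists N, forall i, P i N.
Proof.
move=> mono h.
suff [N hN] : exists N, forall i, i \in enum I -> P i N.
  by exists N => i; apply: hN; rewrite mem_enum.
elim: (enum I) => [|i s [N hN]]; first by exists 0%N.
have [M hM] := h i; exists (maxn N M) => j; rewrite in_cons => /predU1P[->|hj].
  by apply: mono hM; rewrite leq_maxr.
by apply: mono (hN _ hj); rewrite leq_maxl.
Qed.

Section ComplexSequences.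
Variable R : realType.
Local Notation C := (R[i]).
Local Notation nc := (@normc R).
Implicit Types (u v : nat -> C) (l m : C).

Lemma normc_ge0 (z : C) : 0 <= nc z.
Proof. by case: z => a b; rewrite /normc sqrtr_ge0. Qed.

Lemma normc_gt0 (z : C) : z != 0 -> 0 < nc z.
Proof.
move=> z0; rewrite lt_neqAle normc_ge0 andbT eq_sym.
by apply: contra z0 => /eqP/eq0_normc ->.
Qed.

Lemma normc_distC (x y : C) : nc (x - y) = nc (y - x).
Proof. by rewrite -normcN opprB. Qed.

Lemma normc_le_subD (x y : C) : nc x <= nc (x - y) + nc y.
Proof. by have := le_normcD (x - y) y; rewrite subrK. Qed.

Lemma normc_sum (I : Type) (r : seq I) (F : I -> C) :
  nc (\sum_(i <- r) F i) <= \sum_(i <- r) nc (F i).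
Proof.
elim: r => [|i r IH]; first by rewrite !big_nil normc0.
by rewrite !big_cons; apply: le_trans (le_normcD _ _) _; apply: lerD.
Qed.

Lemma normcX (t : C) n : nc (t ^+ n) = nc t ^+ n.
Proof. by elim: n => [|n IH]; rewrite ?normc1 // !exprS normcM IH. Qed.

Definition cvgc u l :=
  forall e : R, 0 < e -> exists N, forall n, (N <= n)%N -> nc (u n - l) < e.

Lemma cvgc_cst l : cvgc (fun _ => l) l.
Proof. by move=> e e0; exists 0%N => n _; rewrite subrr normc0. Qed.

Lemma cvgc_eventually N0 u v l :
  cvgc u l -> (forall n, (N0 <= n)%N -> u n = v n) -> cvgc v l.
Proof.
move=> cu h e e0; have [N hN] := cu e e0; exists (maxn N N0) => n.
by rewrite geq_max => /andP[nN nN0]; rewrite -h ?hN.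
Qed.

Lemma cvgc_ext u v l : cvgc u l -> u =1 v -> cvgc v l.
Proof. by move=> cu h; apply: (cvgc_eventually (N0 := 0) cu) => n _. Qed.

Lemma cvgcD u v l m : cvgc u l -> cvgc v m -> cvgc (fun n => u n + v n) (l + m).
Proof.
move=> cu cvv e e0.
have e2 : 0 < e / 2 by rewrite divr_gt0.
have [N1 h1] := cu _ e2; have [N2 h2] := cvv _ e2.
exists (maxn N1 N2) => n; rewrite geq_max => /andP[n1 n2].
have -> : u n + v n - (l + m) = (u n - l) + (v n - m) by ring.
by apply: le_lt_trans (le_normcD _ _) _; have := h1 _ n1; have := h2 _ n2; lra.
Qed.

Lemma cvgcN u l : cvgc u l -> cvgc (fun n => - u n) (- l).
Proof.
move=> cu e e0; have [N h] := cu e e0; exists N => n hn.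
by rewrite -opprD normcN h.
Qed.

Lemma cvgcM u v l m : cvgc u l -> cvgc v m -> cvgc (fun n => u n * v n) (l * m).
Proof.
move=> cu cvv e e0.
set K := 1 + nc l + nc m.
have bl := normc_ge0 l; have bm := normc_ge0 m.
have K0 : 0 < K by rewrite /K; lra.
set d := Num.min 1 (e / K).
have d0 : 0 < d by rewrite lt_min ltr01 divr_gt0.
have d1 : d <= 1 by rewrite ge_min lexx.
have dK : d * K <= e.
  have : d <= e / K by rewrite ge_min lexx orbT.
  by rewrite -(ler_pM2r K0) divfK ?gt_eqF.
have [N1 h1] := cu _ d0; have [N2 h2] := cvv _ d0.
exists (maxn N1 N2) => n; rewrite geq_max => /andP[n1 n2].
have -> : u n * v n - l * m = (u n - l) * (v n - m) + (u n - l) * m + l * (v n - m).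
  by ring.
have a1 := h1 _ n1; have a2 := h2 _ n2.
have b1 := normc_ge0 (u n - l); have b2 := normc_ge0 (v n - m).
apply: le_lt_trans (le_normcD _ _) _; rewrite normcM.
apply: le_lt_trans (lerD (le_normcD _ _) (lexx _)) _; rewrite !normcM.
have : nc (u n - l) * nc (v n - m) <= d * d by apply: ler_pM => //; apply: ltW.
have : nc (u n - l) * nc m <= d * nc m by apply: ler_wpM2r => //; apply: ltW.
have : nc l * nc (v n - m) <= nc l * d by apply: ler_wpM2l => //; apply: ltW.
have : d * d <= d by nra.
move: dK; rewrite /K; nra.
Qed.

Lemma cvgcV u l : l != 0 -> cvgc u l -> cvgc (fun n => (u n)^-1) l^-1.
Proof.
move=> l0 cu e e0; have L0 := normc_gt0 l0.
set d := Num.min (nc l / 2) (e * nc l * nc l / 2).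
have d0 : 0 < d by rewrite lt_min !divr_gt0 ?mulr_gt0.
have dl : d <= nc l / 2 by rewrite ge_min lexx.
have de : d <= e * nc l * nc l / 2 by rewrite ge_min lexx orbT.
have [N h] := cu _ d0; exists N => n /h a.
have un : nc l / 2 < nc (u n) by have := normc_le_subD l (u n); rewrite normc_distC; lra.
have u0 : u n != 0 by apply: contraTneq un => ->; rewrite normc0; lra.
have -> : (u n)^-1 - l^-1 = (l - u n) / (u n * l) by field; rewrite u0 l0.
rewrite normcM normcV normcM normc_distC ltr_pdivrMr ?mulr_gt0 ?normc_gt0 //.
have : nc l / 2 * nc l <= nc (u n) * nc l by rewrite ler_pM2r // ltW.
nra.
Qed.

Lemma cvgc_sum (I : Type) (r : seq I) (P : pred I) (F : nat -> I -> C) (G : I -> C) :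
  (forall i, cvgc (fun n => F n i) (G i)) ->
  cvgc (fun n => \sum_(i <- r | P i) F n i) (\sum_(i <- r | P i) G i).
Proof.
move=> h; elim: r => [|i r IH].
  by rewrite big_nil; apply: cvgc_ext (cvgc_cst 0) _ => n; rewrite big_nil.
rewrite big_cons; case: ifP => hP.
  by apply: cvgc_ext (cvgcD (h i) IH) _ => n; rewrite big_cons hP.
by apply: cvgc_ext IH _ => n; rewrite big_cons hP.
Qed.

Lemma cvgc_prod (I : Type) (r : seq I) (P : pred I) (F : nat -> I -> C) (G : I -> C) :
  (forall i, cvgc (fun n => F n i) (G i)) ->
  cvgc (fun n => \prod_(i <- r | P i) F n i) (\prod_(i <- r | P i) G i).
Proof.
move=> h; elim: r => [|i r IH].
  by rewrite big_nil; apply: cvgc_ext (cvgc_cst 1) _ => n; rewrite big_nil.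
rewrite big_cons; case: ifP => hP.
  by apply: cvgc_ext (cvgcM (h i) IH) _ => n; rewrite big_cons hP.
by apply: cvgc_ext IH _ => n; rewrite big_cons hP.
Qed.

Lemma cvgc_det n (A : nat -> 'M[C]_n) (B : 'M[C]_n) :
  (forall i j, cvgc (fun k => A k i j) (B i j)) -> cvgc (fun k => \det (A k)) (\det B).
Proof.
move=> cvgA; apply: cvgc_sum => s; apply: cvgcM (cvgc_cst _) _.
by apply: cvgc_prod => i; apply: cvgA.
Qed.

Lemma cvgc_invmx n (A : nat -> 'M[C]_n) (B : 'M[C]_n) :
  B \in unitmx -> (forall i j, cvgc (fun k => A k i j) (B i j)) ->
  exists N0, (forall k, (N0 <= k)%N -> A k \in unitmx) /\
    forall i j, cvgc (fun k => invmx (A k) i j) (invmx B i j).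
Proof.
move=> uB h.
have dB : \det B != 0 by rewrite -unitfE -unitmxE.
have [N0 hN] := cvgc_det h (normc_gt0 dB).
have uA k : (N0 <= k)%N -> A k \in unitmx.
  move=> /hN; rewrite unitmxE unitfE; apply: contraTneq => ->.
  by rewrite sub0r normcN ltxx.
exists N0; split => // i j.
have cof : cvgc (fun k => cofactor (A k) j i) (cofactor B j i).
  apply: cvgcM (cvgc_cst _) _; apply: cvgc_det => a b; rewrite !mxE.
  by apply: cvgc_ext (h _ _) _ => k; rewrite !mxE.
have -> : invmx B i j = (\det B)^-1 * cofactor B j i by rewrite /invmx uB !mxE.
apply: (cvgc_eventually (N0 := N0) (cvgcM (cvgcV dB (cvgc_det h)) cof)) => k hk.
by rewrite /invmx uA // !mxE.
Qed.

End ComplexSequences.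

Section InterpolationSystem.
Variable R : realType.
Local Notation C := (R[i]).
Variable D : nat.
Local Notation N := D.+1.
Implicit Types (a b : {poly C}) (c : 'rV[C]_(N + N)).

Definition row_num c : {poly C} := \poly_(k < N) c 0 (lshift N (inord k)).
Definition row_den c : {poly C} := \poly_(k < N) c 0 (rshift N (inord k)).
Definition coef_row a b : 'rV[C]_(N + N) :=
  \row_(i < N + N) (if (i < N)%N then a`_i else b`_(i - N)).

Lemma row_num_coef_row a b : (size a <= N)%N -> row_num (coef_row a b) = a.
Proof.
move=> ha; apply/polyP => k; rewrite coef_poly.
case: ltnP => hk; first by rewrite mxE /= inordK // hk.
by rewrite nth_default //; apply: leq_trans hk.
Qed.

Lemma row_den_coef_row a b : (size b <= N)%N -> row_den (coef_row a b) = b.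
Proof.
move=> hb; apply/polyP => k; rewrite coef_poly.
case: ltnP => hk; first by rewrite mxE /= inordK // ltnNge leq_addr /= addKn.
by rewrite nth_default //; apply: leq_trans hk.
Qed.

Lemma coef_rowK c : coef_row (row_num c) (row_den c) = c.
Proof.
apply/rowP => i; rewrite mxE coef_poly; case: ifP => hi.
  by rewrite hi; congr (c 0 _); apply: val_inj; rewrite /= inordK.
have hi' : (i - N < N)%N by have := ltn_ord i; move: hi; lia.
rewrite coef_poly hi'; congr (c 0 _); apply: val_inj; rewrite /= inordK //.
by move: hi; lia.
Qed.

Lemma row_numZ (k : C) c : row_num (k *: c) = k *: row_num c.
Proof. by apply/polyP => i; rewrite coefZ !coef_poly; case: ifP; rewrite ?mxE ?mulr0. Qed.

Lemma row_denZ (k : C) c : row_den (k *: c) = k *: row_den c.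
Proof. by apply/polyP => i; rewrite coefZ !coef_poly; case: ifP; rewrite ?mxE ?mulr0. Qed.

Lemma coef_rowZ (k : C) a b : coef_row (k *: a) (k *: b) = k *: coef_row a b.
Proof. by apply/rowP => i; rewrite !mxE !coefZ; case: ifP. Qed.

(* Right multiplication by [interp_mx z w j0] sends a coefficient row c = (a, b)
   to the values a(z_j) - w_j b(z_j) for j <= 2D, followed by the coordinate
   c_j0, which normalises the solutions. *)
Definition interp_mx (z w : nat -> C) (j0 : 'I_(N + N)) : 'M[C]_(N + N) :=
  \matrix_(i, j) if (j < (D + D).+1)%N then
     (if (i < N)%N then z j ^+ i else - w j * z j ^+ (i - N))
  else (i == j0)%:R.

Lemma mul_interp_mx z w j0 c j : (c *m interp_mx z w j0) 0 j =
  if (j < (D + D).+1)%N then (row_num c).[z j] - w j * (row_den c).[z j] else c 0 j0.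
Proof.
rewrite !mxE; case: ifP => hj.
  rewrite big_split_ord /=.
  rewrite (horner_coef_wide _ (size_poly _ _)) (horner_coef_wide _ (size_poly _ _)).
  rewrite mulr_sumr -sumrN; congr (_ + _); apply: eq_bigr => k _; rewrite !mxE hj /=.
    by rewrite ltn_ord coef_poly ltn_ord inord_val.
  by rewrite ltnNge leq_addr /= addKn coef_poly ltn_ord inord_val; ring.
rewrite (bigD1 j0) //= big1 ?addr0 => [|i ne]; rewrite mxE hj ?eqxx ?mulr1 //.
by rewrite (negPf ne) mulr0.
Qed.

End InterpolationSystem.

Section InterpolationSolutions.
Variable R : realType.
Local Notation C := (R[i]).
Variable D : nat.
Local Notation N := D.+1.
Implicit Types (c : 'rV[C]_(N + N)) (z w : nat -> C).

Lemma last_col_lt : ((D + D).+1 < N + N)%N. Proof. lia. Qed.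

Local Notation jlast := (Ordinal last_col_lt).

Definition last_unit_row : 'rV[C]_(N + N) := \row_j ((j == jlast)%:R).

Lemma mul_interp_mx_eq z w (j0 : 'I_(N + N)) c :
  (forall j, (j < (D + D).+1)%N -> (row_num c).[z j] - w j * (row_den c).[z j] = 0) ->
  c *m interp_mx z w j0 = c 0 j0 *: last_unit_row.
Proof.
move=> hc; apply/rowP => j; rewrite mul_interp_mx !mxE; case: ifP => hj.
  have -> : (j == jlast) = false by apply: contraTF hj => /eqP ->; rewrite ltnn.
  by rewrite mulr0 hc.
have -> : j = jlast by apply: val_inj => /=; have := ltn_ord j; move: hj; lia.
by rewrite eqxx mulr1.
Qed.

Lemma interp_solutionE z w (j0 : 'I_(N + N)) c : interp_mx z w j0 \in unitmx ->
  (forall j, (j < (D + D).+1)%N -> (row_num c).[z j] - w j * (row_den c).[z j] = 0) ->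
  c = c 0 j0 *: (last_unit_row *m invmx (interp_mx z w j0)).
Proof. by move=> uS /mul_interp_mx_eq eq1; rewrite scalemxAl -eq1 mulmxK. Qed.

Lemma cvgc_coef_row_num (c : nat -> 'rV[C]_(N + N)) (c0 : 'rV[C]_(N + N)) :
  (forall i, cvgc (fun n => c n 0 i) (c0 0 i)) ->
  forall i, cvgc (fun n => (row_num (c n))`_i) (row_num c0)`_i.
Proof.
move=> cvg_c i; rewrite coef_poly.
apply: cvgc_ext (_ : cvgc (fun n => if (i < N)%N then _ else 0) _) _ => [|n].
  by case: ifP => _; [apply: cvg_c | apply: cvgc_cst].
by rewrite coef_poly.
Qed.

Lemma cvgc_coef_row_den (c : nat -> 'rV[C]_(N + N)) (c0 : 'rV[C]_(N + N)) :
  (forall i, cvgc (fun n => c n 0 i) (c0 0 i)) ->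
  forall i, cvgc (fun n => (row_den (c n))`_i) (row_den c0)`_i.
Proof.
move=> cvg_c i; rewrite coef_poly.
apply: cvgc_ext (_ : cvgc (fun n => if (i < N)%N then _ else 0) _) _ => [|n].
  by case: ifP => _; [apply: cvg_c | apply: cvgc_cst].
by rewrite coef_poly.
Qed.

End InterpolationSolutions.

Section InterpolationLimit.
Variable R : realType.
Local Notation C := (R[i]).
Variables (D : nat) (p q : {poly C}) (zs : seq C).
Hypotheses (D_gt0 : (0 < D)%N) (cop : coprimep p q)
  (size_pq : maxn (size p) (size q) = D.+1)
  (uniq_zs : uniq zs) (size_zs : size zs = (D + D).+1)
  (q_zs : forall z, z \in zs -> q.[z] != 0).
Local Notation N := D.+1.
Local Notation z := (nth 0 zs).
Local Notation wl := (fun j => p.[z j] / q.[z j]).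

Lemma interp_limit_kernel (c : 'rV[C]_(N + N)) :
  (forall j, (j < (D + D).+1)%N -> (row_num c).[z j] - wl j * (row_den c).[z j] = 0) ->
  exists k, c = k *: coef_row D p q.
Proof.
move=> hc.
have hz x : x \in zs -> (row_num c).[x] * q.[x] = (row_den c).[x] * p.[x].
  move=> hx; have hi : (index x zs < (D + D).+1)%N by rewrite -size_zs index_mem.
  move/eqP: (hc _ hi); rewrite nth_index // subr_eq0 => /eqP ->.
  by rewrite mulrAC divfK ?q_zs // mulrC.
have [k [ea eb]] := coprimep_interp_unique cop size_pq D_gt0
  (size_poly _ _ : (size (row_num c) <= N)%N) (size_poly _ _ : (size (row_den c) <= N)%N)
  uniq_zs size_zs hz.
by exists k; rewrite -[c]coef_rowK ea eb coef_rowZ.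
Qed.

Lemma coef_row_neq0 : exists j0, coef_row D p q 0 j0 != 0.
Proof.
apply/existsP; apply: contraT; rewrite negb_exists => /forallP c0.
have [p0 _] := coprimep_maxn_neq0 cop size_pq D_gt0.
have sp : (size p <= N)%N by rewrite -size_pq leq_maxl.
have : row_num (coef_row D p q) = 0.
  by apply/polyP => k; rewrite coef_poly coef0; case: ifP => // _; apply/eqP/negbNE/c0.
by rewrite row_num_coef_row // => /eqP; rewrite (negPf p0).
Qed.

Lemma unit_interp_limit (j0 : 'I_(N + N)) :
  coef_row D p q 0 j0 != 0 -> interp_mx z wl j0 \in unitmx.
Proof.
move=> cj0; rewrite -row_free_unit; apply/inj_row_free => c hc.
have [k ek] : exists k, c = k *: coef_row D p q.
  apply: interp_limit_kernel => j hj; have hjN : (j < N + N)%N by lia.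
  have := congr1 (fun M : 'M[C]_(1, N + N) => M 0 (Ordinal hjN)) hc.
  by rewrite mul_interp_mx /= hj mxE.
have := congr1 (fun M : 'M[C]_(1, N + N) => M 0 (Ordinal (last_col_lt D))) hc.
rewrite mul_interp_mx /= ltnn mxE ek mxE => /eqP.
by rewrite mulf_eq0 (negPf cj0) orbF => /eqP ->; rewrite scale0r.
Qed.

Lemma interp_solution_cvg (w : nat -> nat -> C) :
  (forall j, (j < (D + D).+1)%N -> cvgc (fun n => w n j) (wl j)) ->
  exists (c : nat -> 'rV[C]_(N + N)) (k : C) (N0 : nat), [/\ k != 0,
    forall i, cvgc (fun n => c n 0 i) ((k *: coef_row D p q) 0 i) &
    forall n, (N0 <= n)%N -> forall c' : 'rV[C]_(N + N),
      (forall j, (j < (D + D).+1)%N ->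
         (row_num c').[z j] - w n j * (row_den c').[z j] = 0) ->
      exists rho, c' = rho *: c n].
Proof.
move=> cvgw; have [j0 cj0] := coef_row_neq0.
have uS := unit_interp_limit cj0.
set S := interp_mx z wl j0; pose Sn n := interp_mx z (w n) j0.
have cvgS i j : cvgc (fun n => Sn n i j) (S i j).
  have : cvgc (fun n => if (j < (D + D).+1)%N then
      (if (i < N)%N then z j ^+ i else - w n j * z j ^+ (i - N)) else (i == j0)%:R) (S i j).
    rewrite mxE; case: ifP => hj; last exact: cvgc_cst.
    case: ifP => _; first exact: cvgc_cst.
    exact: cvgcM (cvgcN (cvgw _ hj)) (cvgc_cst _).
  by move/cvgc_ext; apply=> n; rewrite mxE.
have [N0 [uSn cvg_inv]] := cvgc_invmx uS cvgS.
set e := last_unit_row R D.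
have eSS : e *m invmx S *m S = e by rewrite mulmxKV.
have [k ek] : exists k, e *m invmx S = k *: coef_row D p q.
  apply: interp_limit_kernel => j hj; have hjN : (j < N + N)%N by lia.
  have := congr1 (fun M : 'M[C]_(1, N + N) => M 0 (Ordinal hjN)) eSS.
  rewrite mul_interp_mx /= hj !mxE => ->.
  by apply/eqP; rewrite pnatr_eq0 eqb0; apply: contraTN hj => /eqP[->]; rewrite ltnn.
exists (fun n => e *m invmx (Sn n)), k, N0; split.
- pose at_last (M : 'M[C]_(1, N + N)) := M 0 (Ordinal (last_col_lt D)).
  apply: contra_eq_neq (congr1 at_last eSS); rewrite /at_last.
  by rewrite mul_interp_mx /= ltnn ek !mxE eqxx => ->; rewrite mul0r eq_sym oner_neq0.
- move=> i; rewrite -ek mxE.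
  apply: cvgc_ext (cvgc_sum _ _ (fun j => cvgcM (cvgc_cst (e 0 j)) (cvg_inv j i))) _.
  by move=> n; rewrite mxE.
- by move=> n hn c' hc'; exists (c' 0 j0); apply: interp_solutionE (uSn n hn) hc'.
Qed.

End InterpolationLimit.

Section ChordalMetric.
Variable R : realType.
Local Notation C := (R[i]).
Local Notation nc := (@normc R).
Implicit Types (x y : C).

Lemma ler_cross_div (a b c d : R) : 0 < b -> 0 < d -> a * d <= c * b -> a / b <= c / d.
Proof. by move=> b0 d0 h; rewrite ler_pdivrMr // mulrAC ler_pdivlMr. Qed.

Lemma sqrtr_sqr_ge0 (x : R) : 0 <= x -> Num.sqrt (x ^+ 2) = x.
Proof. by move=> x0; rewrite sqrtr_sqr ger0_norm. Qed.

Lemma nsq_normc (z : C) : nsq z = nc z ^+ 2.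
Proof. by case: z => a b; rewrite /nsq /normc /= sqr_sqrtr // addr_ge0 // sqr_ge0. Qed.

Lemma chord_refl (s : sphere R) : chord s s = 0.
Proof.
by case: s => [u|] //; rewrite /chord subrr nsq_normc normc0 expr0n sqrtr0 mulr0 mul0r.
Qed.

Definition hnorm x y : R := Num.sqrt (nc x ^+ 2 + nc y ^+ 2).

Lemma hnorm_sq x y : hnorm x y ^+ 2 = nc x ^+ 2 + nc y ^+ 2.
Proof. by rewrite sqr_sqrtr // addr_ge0 // sqr_ge0. Qed.

Lemma hnorm_ge0 x y : 0 <= hnorm x y.
Proof. exact: sqrtr_ge0. Qed.

Lemma hnorm_gt0 x y : (x != 0) || (y != 0) -> 0 < hnorm x y.
Proof.
have := normc_ge0 x; have := normc_ge0 y.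
rewrite sqrtr_gt0 => hy hx /orP[/normc_gt0|/normc_gt0]; nra.
Qed.

Lemma hnorm_bounds x y :
  [/\ (nc x + nc y) / 2 <= hnorm x y, nc x <= hnorm x y, nc y <= hnorm x y
    & hnorm x y <= nc x + nc y].
Proof.
have hx := normc_ge0 x; have hy := normc_ge0 y.
have le_hnorm (t : R) : 0 <= t -> t ^+ 2 <= nc x ^+ 2 + nc y ^+ 2 -> t <= hnorm x y.
  by move=> t0 ht; rewrite -(sqrtr_sqr_ge0 t0) ler_wsqrtr.
split; [apply: le_hnorm; nra | apply: le_hnorm; nra | apply: le_hnorm; nra |].
by rewrite -(sqrtr_sqr_ge0 (addr_ge0 hx hy)) ler_wsqrtr //; nra.
Qed.

Lemma sqrt1_normc (u : C) : Num.sqrt (1 + nc u ^+ 2) = hnorm u 1.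
Proof. by rewrite /hnorm normc1 expr1n addrC. Qed.

Lemma hnorm_div x y : y != 0 -> hnorm (x / y) 1 = hnorm x y / nc y.
Proof.
move=> y0; have Y := normc_gt0 y0.
apply: (@pexpIrn _ 2) => //; rewrite ?nnegrE ?hnorm_ge0 ?divr_ge0 ?hnorm_ge0 ?normc_ge0 //.
by rewrite expr_div_n !hnorm_sq normcM normcV normc1; field; rewrite gt_eqF.
Qed.

Lemma hnorm_x0 x : hnorm x 0 = nc x.
Proof. by rewrite /hnorm normc0 expr0n addr0 sqrtr_sqr_ge0 ?normc_ge0. Qed.

Lemma chord_hpoint (a1 a2 b1 b2 : C) : (a1 != 0) || (a2 != 0) -> (b1 != 0) || (b2 != 0) ->
  chord (hpoint a1 a2) (hpoint b1 b2) =
  2 * nc (a1 * b2 - a2 * b1) / (hnorm a1 a2 * hnorm b1 b2).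
Proof.
move=> ha hb; have NA := hnorm_gt0 ha; have NB := hnorm_gt0 hb; rewrite /hpoint.
have [a20|a20] := eqVneq a2 0; have [b20|b20] := eqVneq b2 0 => /=.
- by rewrite a20 b20 !mul0r !mulr0 subrr normc0 mulr0 mul0r.
- move: ha; rewrite a20 eqxx orbF => a10; have A1 := normc_gt0 a10.
  have B2 := normc_gt0 b20.
  rewrite nsq_normc sqrt1_normc hnorm_div // hnorm_x0 mul0r subr0 normcM.
  by field; rewrite !gt_eqF ?mulr_gt0.
- move: hb; rewrite b20 eqxx orbF => b10; have B1 := normc_gt0 b10.
  have A2 := normc_gt0 a20.
  rewrite nsq_normc sqrt1_normc hnorm_div // hnorm_x0 mulr0 sub0r normcN normcM.
  by field; rewrite !gt_eqF ?mulr_gt0.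
- have A2 := normc_gt0 a20; have B2 := normc_gt0 b20.
  rewrite !nsq_normc sqrtr_sqr_ge0 ?normc_ge0 // sqrtrM ?addr_ge0 ?sqr_ge0 //.
  rewrite !sqrt1_normc !hnorm_div //.
  have -> : a1 / a2 - b1 / b2 = (a1 * b2 - a2 * b1) / (a2 * b2).
    by field; rewrite a20 b20.
  rewrite normcM normcV normcM.
  by field; rewrite !gt_eqF ?mulr_gt0.
Qed.

Lemma chord_near_finite (w : C) (e : R) : 0 < e -> exists2 d : R, 0 < d &
  forall s, chord s (Some w) < d -> exists2 u, s = Some u & nc (u - w) < e.
Proof.
move=> e0; have [_ Ww W1 _] := hnorm_bounds w 1; rewrite normc1 in W1.
set W := hnorm w 1 in Ww W1 *.
have W0 : 0 < W by lra.
exists (Num.min (1 / W) (2 * e / ((2 * W + e) * W))).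
  by rewrite lt_min !divr_gt0 ?mulr_gt0 //; lra.
case=> [u|]; rewrite lt_min => /andP[h1 h2]; last first.
  move: h1; rewrite /chord nsq_normc sqrt1_normc -/W ltNge => /negP[].
  by apply: ler_cross_div => //; lra.
exists u => //; move: h2; rewrite /chord !nsq_normc sqrtr_sqr_ge0 ?normc_ge0 //.
rewrite sqrtrM ?addr_ge0 ?sqr_ge0 // !sqrt1_normc -/W => h2.
rewrite ltNge; apply/negP => hd; move: h2; apply/negP; rewrite -leNgt.
set dd := nc (u - w) in hd *.
have U0 : 0 < hnorm u 1 by apply: hnorm_gt0; rewrite oner_eq0 orbT.
have Uu : hnorm u 1 <= 2 * W + dd.
  have [_ _ _] := hnorm_bounds u 1; rewrite normc1.
  by have := normc_le_subD u w; rewrite -/dd; lra.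
apply: ler_cross_div; rewrite ?mulr_gt0 //; first by lra.
have h3 : e * hnorm u 1 <= e * (2 * W + dd) by apply: ler_wpM2l => //; lra.
have h4 : e * W * W <= dd * W * W by rewrite -!mulrA; apply: ler_wpM2r => //; nra.
have h5 : e * hnorm u 1 * W <= e * (2 * W + dd) * W by apply: ler_wpM2r => //; lra.
nra.
Qed.

Lemma chord_hpoint_le (a1 a2 b1 b2 : C) :
  0 < nc b1 + nc b2 -> nc (a1 - b1) + nc (a2 - b2) <= (nc b1 + nc b2) / 2 ->
  chord (hpoint a1 a2) (hpoint b1 b2) <=
    16 * (nc (a1 - b1) + nc (a2 - b2)) / (nc b1 + nc b2).
Proof.
move=> Sb0 hd.
have ha : (a1 != 0) || (a2 != 0).
  apply: contraTT hd; rewrite negb_or !negbK => /andP[/eqP-> /eqP->].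
  by rewrite !sub0r !normcN -ltNge; lra.
have hb : (b1 != 0) || (b2 != 0).
  apply: contraTT Sb0; rewrite negb_or !negbK => /andP[/eqP-> /eqP->].
  by rewrite normc0 addr0 ltxx.
rewrite chord_hpoint //.
have t1 := normc_le_subD b1 a1; have t2 := normc_le_subD b2 a2.
rewrite normc_distC in t1; rewrite normc_distC in t2.
have g1 := normc_ge0 a1; have g2 := normc_ge0 a2.
have g3 := normc_ge0 b1; have g4 := normc_ge0 b2.
have g5 := normc_ge0 (a1 - b1); have g6 := normc_ge0 (a2 - b2).
have X0 := normc_ge0 (a1 * b2 - a2 * b1).
have X : nc (a1 * b2 - a2 * b1) <= nc (a1 - b1) * nc b2 + nc (a2 - b2) * nc b1.
  have -> : a1 * b2 - a2 * b1 = (a1 - b1) * b2 - (a2 - b2) * b1 by ring.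
  by apply: le_trans (le_normcD _ _) _; rewrite normcN !normcM.
have [NA _ _ _] := hnorm_bounds a1 a2; have [NB _ _ _] := hnorm_bounds b1 b2.
set Sb := nc b1 + nc b2 in Sb0 hd NB *.
set Sd := nc (a1 - b1) + nc (a2 - b2) in hd *.
have XS : nc (a1 * b2 - a2 * b1) <= Sd * Sb by rewrite /Sd /Sb; nra.
have P : Sb / 4 * (Sb / 2) <= hnorm a1 a2 * hnorm b1 b2.
  by apply: ler_pM; rewrite /Sb /Sd in Sb0 hd NB *; lra.
apply: ler_cross_div => //; first by rewrite mulr_gt0 ?hnorm_gt0.
have h1 : 2 * nc (a1 * b2 - a2 * b1) * Sb <= 2 * (Sd * Sb) * Sb.
  by apply: ler_wpM2r; lra.
have h2 : Sd * (Sb * Sb) <= Sd * (8 * (hnorm a1 a2 * hnorm b1 b2)).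
  by apply: ler_wpM2l; rewrite /Sd; lra.
nra.
Qed.

Lemma sconv_Some (u : nat -> sphere R) (l : C) : sconv u (Some l) ->
  (exists N, forall n, (N <= n)%N -> u n = Some (odflt 0 (u n))) /\
  cvgc (fun n => odflt 0 (u n)) l.
Proof.
move=> cu; have [d d0 hd] := chord_near_finite l ltr01.
split; first by have [N hN] := cu _ d0; exists N => n /hN/hd[v ->].
move=> e e0; have [d' d'0 hd'] := chord_near_finite l e0.
by have [N hN] := cu _ d'0; exists N => n /hN/hd'[v ->].
Qed.

End ChordalMetric.

Section FormBounds.
Variable R : realType.
Local Notation C := (R[i]).
Local Notation nc := (@normc R).
Implicit Types (P Q : {poly C}) (x y t : C).

Definition coef_norm1 P : R := \sum_(i < size P) nc P`_i.

Lemma coef_norm1_ge0 P : 0 <= coef_norm1 P.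
Proof. by rewrite sumr_ge0 // => i _; apply: normc_ge0. Qed.

Lemma normc_horner_le P t : nc t <= 1 -> nc P.[t] <= coef_norm1 P.
Proof.
move=> t1; rewrite horner_coef; apply: le_trans (normc_sum _ _) _.
apply: ler_sum => i _; rewrite normcM normcX.
by rewrite ler_piMr ?normc_ge0 // exprn_ile1 ?normc_ge0.
Qed.

(* By Bezout, u1 P + u2 Q is a nonzero constant c, and |u1|, |u2| are bounded
   on the unit disc. *)
Lemma coprime_lower_bound P Q : (forall t, (P.[t] != 0) || (Q.[t] != 0)) ->
  exists2 m : R, 0 < m & forall t, nc t <= 1 -> m <= nc P.[t] + nc Q.[t].
Proof.
move=> h.
have cop : coprimep P Q.
  by apply/Pdiv.ClosedField.coprimepP => x /eqP rx; have := h x; rewrite rx eqxx.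
have [[u1 u2] /= hu] := Bezout_coprimepP _ _ cop.
set W := u1 * P + u2 * Q in hu.
have sW : size W = 1%N by apply/eqP; rewrite size_poly_eq1.
have eW := size1_polyC (eq_leq sW); set c := W`_0 in eW.
have c0 : c != 0 by apply: contra_eq_neq sW; rewrite eW => ->; rewrite size_poly0.
have g5 := coef_norm1_ge0 u1; have g6 := coef_norm1_ge0 u2.
set K := coef_norm1 u1 + coef_norm1 u2 + 1.
have K0 : 0 < K by rewrite /K; lra.
exists (nc c / K) => [|t t1]; first by rewrite divr_gt0 // normc_gt0.
have <- : u1.[t] * P.[t] + u2.[t] * Q.[t] = c.
  by rewrite -hornerM -hornerM -hornerD -/W eW hornerC.
rewrite ler_pdivrMr //; apply: le_trans (le_normcD _ _) _; rewrite !normcM.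
have b1 := normc_horner_le u1 t1; have b2 := normc_horner_le u2 t1.
have g1 := normc_ge0 P.[t]; have g2 := normc_ge0 Q.[t].
have g3 := normc_ge0 u1.[t]; have g4 := normc_ge0 u2.[t].
have h1 : nc u1.[t] * nc P.[t] <= coef_norm1 u1 * nc P.[t] by apply: ler_wpM2r.
have h2 : nc u2.[t] * nc Q.[t] <= coef_norm1 u2 * nc Q.[t] by apply: ler_wpM2r.
rewrite /K; nra.
Qed.

Definition unit_lift x y : Prop := [/\ nc x <= 1, nc y <= 1 & y = 1 \/ x = 1].

Lemma hpoint_unit_lift (s : sphere R) :
  exists x y, [/\ (x != 0) || (y != 0), hpoint x y = s & unit_lift x y].
Proof.
case: s => [u|]; last first.
  exists 1, 0; split; rewrite ?oner_eq0 // /hpoint ?eqxx //.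
  by split; rewrite ?normc1 ?normc0 ?ler01 //; right.
have [u1|u1] := lerP (nc u) 1.
  exists u, 1; split; rewrite ?oner_eq0 ?orbT // /hpoint ?oner_eq0 ?divr1 //.
  by split; rewrite ?normc1 //; left.
have u0 : u != 0 by apply: contraTneq u1 => ->; rewrite normc0 ltr10.
exists 1, u^-1; split; rewrite ?oner_eq0 // /hpoint ?invr_eq0 ?u0 ?div1r ?invrK //.
split; rewrite ?normc1 //; last by right.
by rewrite normcV invf_le1 ?normc_gt0 // ltW.
Qed.

Lemma homog_lower_bound D P Q : (size P <= D.+1)%N -> (size Q <= D.+1)%N ->
  (forall x y, (x != 0) || (y != 0) ->
     (homog D P x y != 0) || (homog D Q x y != 0)) ->
  exists2 m : R, 0 < m & forall x y, unit_lift x y ->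
    m <= nc (homog D P x y) + nc (homog D Q x y).
Proof.
move=> sP sQ h.
have [mA mA0 hmA] : exists2 m : R, 0 < m & forall t, nc t <= 1 -> m <= nc P.[t] + nc Q.[t].
  apply: coprime_lower_bound => t; rewrite -!(homog_y1 _ sP) -(homog_y1 _ sQ).
  by apply: h; rewrite oner_eq0 orbT.
pose rev P := \poly_(k < D.+1) P`_(D - k).
have [mB mB0 hmB] : exists2 m : R, 0 < m &
    forall t, nc t <= 1 -> m <= nc (rev P).[t] + nc (rev Q).[t].
  by apply: coprime_lower_bound => t; rewrite -!homog_x1; apply: h; rewrite oner_eq0.
exists (Num.min mA mB) => [|x y [hx hy [->|->]]]; first by rewrite lt_min mA0 mB0.
  by rewrite !homog_y1 //; apply: le_trans (hmA x hx); rewrite ge_min lexx.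
by rewrite !homog_x1; apply: le_trans (hmB y hy); rewrite ge_min lexx orbT.
Qed.

Lemma normc_homog_le D P x y : nc x <= 1 -> nc y <= 1 ->
  nc (homog D P x y) <= \sum_(k < D.+1) nc P`_k.
Proof.
move=> hx hy; apply: le_trans (normc_sum _ _) _; apply: ler_sum => k _.
rewrite !normcM !normcX -mulrA ler_piMr ?normc_ge0 //.
by rewrite mulr_ile1 ?exprn_ge0 ?exprn_ile1 ?normc_ge0.
Qed.

Lemma normc_homog_sub_le D P P' x y (d : R) : nc x <= 1 -> nc y <= 1 ->
  (forall k, (k < D.+1)%N -> nc (P'`_k - P`_k) <= d) ->
  nc (homog D P' x y - homog D P x y) <= d *+ D.+1.
Proof.
move=> hx hy hd; rewrite -homogB; apply: le_trans (normc_homog_le _ _ hx hy) _.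
have -> : d *+ D.+1 = \sum_(k < D.+1) d by rewrite sumr_const card_ord.
apply: ler_sum => k _.
by rewrite coefB hd.
Qed.

Lemma homog_unif_cvg D P Q (Pn Qn : nat -> {poly C}) :
  (size P <= D.+1)%N -> (size Q <= D.+1)%N ->
  (forall x y, (x != 0) || (y != 0) ->
     (homog D P x y != 0) || (homog D Q x y != 0)) ->
  (forall k, cvgc (fun n => (Pn n)`_k) P`_k) ->
  (forall k, cvgc (fun n => (Qn n)`_k) Q`_k) ->
  forall eps : R, 0 < eps -> exists N, forall n, (N <= n)%N ->
    forall x y, unit_lift x y ->
    chord (hpoint (homog D (Pn n) x y) (homog D (Qn n) x y))
          (hpoint (homog D P x y) (homog D Q x y)) < eps.
Proof.
move=> sP sQ hPQ cvgP cvgQ eps eps0.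
have [m m0 hm] := homog_lower_bound sP sQ hPQ.
set d := Num.min (m / 2) (eps * m / 32).
have d0 : 0 < d by rewrite lt_min !divr_gt0 // mulr_gt0.
have dm : d <= m / 2 by rewrite ge_min lexx.
have de : d <= eps * m / 32 by rewrite ge_min lexx orbT.
set dl := d / (2 * (D.+1)%:R).
have dl0 : 0 < dl by rewrite divr_gt0 // mulr_gt0 // ltr0n.
have edl : dl *+ D.+1 = d / 2.
  by rewrite /dl -mulr_natr; field; rewrite addrC natr1 pnatr_eq0.
have [N hN] : exists N, forall k : 'I_D.+1, forall n, (N <= n)%N ->
    nc ((Pn n)`_k - P`_k) <= dl /\ nc ((Qn n)`_k - Q`_k) <= dl.
  apply: eventually_forall_fin => [k N M NM h n Mn|k]; first exact: h (leq_trans NM Mn).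
  have [N1 h1] := cvgP k _ dl0; have [N2 h2] := cvgQ k _ dl0.
  by exists (maxn N1 N2) => n; rewrite geq_max => /andP[/h1/ltW ? /h2/ltW ?].
exists N => n hn x y hxy; have [hx hy _] := hxy; have lb := hm x y hxy.
have eP : nc (homog D (Pn n) x y - homog D P x y) <= d / 2.
  by rewrite -edl; apply: normc_homog_sub_le => // k hk; have [] := hN (Ordinal hk) n hn.
have eQ : nc (homog D (Qn n) x y - homog D Q x y) <= d / 2.
  by rewrite -edl; apply: normc_homog_sub_le => // k hk; have [] := hN (Ordinal hk) n hn.
apply: le_lt_trans (chord_hpoint_le _ _) _; [lra | lra |].
set B := nc (homog D P x y) + nc (homog D Q x y) in lb *.
have B0 : 0 < B by lra.
have mB : eps * m <= eps * B by rewrite ler_pM2l.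
by rewrite ltr_pdivrMr //; lra.
Qed.

End FormBounds.

Section HomogMapInterpolation.
Variable R : realType.
Local Notation C := (R[i]).


Lemma homog_map_interp_solution D (g : sphere R -> sphere R) (zs : seq C)
    (w : nat -> C) (c : 'rV[C]_(D.+1 + D.+1)) :
  homog_map D g ->
  (forall j, (j < (D + D).+1)%N -> g (Some (nth 0 zs j)) = Some (w j)) ->
  (forall c' : 'rV[C]_(D.+1 + D.+1), (forall j, (j < (D + D).+1)%N ->
     (row_num c').[nth 0 zs j] - w j * (row_den c').[nth 0 zs j] = 0) ->
   exists rho, c' = rho *: c) ->
  forall x y, (x != 0) || (y != 0) ->
    g (hpoint x y) = hpoint (homog D (row_num c) x y) (homog D (row_den c) x y).
Proof.
move=> [A [B [sA sB hAB]]] gz hsol x y xy.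
have [rho e] : exists rho, coef_row D A B = rho *: c.
  apply: hsol => j hj; rewrite row_num_coef_row // row_den_coef_row //.
  have [] := hAB (nth 0 zs j) 1; first by rewrite oner_eq0 orbT.
  by rewrite /hpoint oner_eq0 divr1 gz // !homog_y1 // => /esym/hpoint_eq_Some.
have eA : A = rho *: row_num c by rewrite -(row_num_coef_row B sA) e row_numZ.
have eB : B = rho *: row_den c by rewrite -(row_den_coef_row A sB) e row_denZ.
have rho0 : rho != 0.
  have h10 : (1 != 0 :> C) || (0 != 0 :> C) by rewrite oner_eq0.
  have [_] := hAB 1 0 h10.
  by apply: contraTneq => r0; rewrite eA eB r0 !scale0r !homog_y0 !coef0 !mul0r eqxx.
by have [-> _] := hAB x y xy; rewrite eA eB !homogZ hpointZ.
Qed.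

End HomogMapInterpolation.

Section HomogMapLimit.
Variable R : realType.
Local Notation C := (R[i]).
Variables (D : nat) (fv : ratmap R) (g : nat -> sphere R -> sphere R) (L : seq C).
Hypotheses (fv_ratmap : is_ratmap fv) (rdeg_fv : rdeg fv = D)
  (g_homog : forall n, homog_map D (g n))
  (g_cvg : forall z, z \notin L -> sconv (fun n => g n (Some z)) (ev fv (Some z))).

Lemma homog_map_coef_cvg : exists (Pn Qn : nat -> {poly C}) (k : C) (N : nat),
  [/\ k != 0, forall i, cvgc (fun n => (Pn n)`_i) (k *: fv.1)`_i,
      forall i, cvgc (fun n => (Qn n)`_i) (k *: fv.2)`_i &
      forall n, (N <= n)%N -> forall x y, (x != 0) || (y != 0) ->
        g n (hpoint x y) = hpoint (homog D (Pn n) x y) (homog D (Qn n) x y)].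
Proof.
have [cop D_gt0] : coprimep fv.1 fv.2 /\ (0 < D)%N by rewrite -rdeg_fv; apply/andP.
have size_fv : maxn (size fv.1) (size fv.2) = D.+1.
  by rewrite -rdeg_fv maxn_size_rdeg ?rdeg_fv.
have [_ q0] := coprimep_maxn_neq0 cop size_fv D_gt0.
have [zs [size_zs uniq_zs zsP]] := exists_fresh_nonroots L (D + D).+1 q0.
pose z := nth 0 zs.
have q_zs x : x \in zs -> fv.2.[x] != 0 by case/zsP/andP.
have cvg_z j : (j < (D + D).+1)%N ->
    sconv (fun n => g n (Some (z j))) (Some (fv.1.[z j] / fv.2.[z j])).
  move=> hj; have /andP[zL qz] : (z j \notin L) && (fv.2.[z j] != 0).
    by apply: zsP; rewrite mem_nth ?size_zs.
  by have := g_cvg zL; rewrite /= /ev_fin qz.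
pose w n j := odflt 0 (g n (Some (z j))).
have [Nw hNw] : exists N, forall j : 'I_(D + D).+1, forall n, (N <= n)%N ->
    g n (Some (z j)) = Some (w n j).
  apply: eventually_forall_fin => [j N M NM h n Mn|j]; first exact: h (leq_trans NM Mn).
  exact: (sconv_Some (cvg_z j (ltn_ord j))).1.
have [c [k [N0 [k0 cvg_c sol_c]]]] := interp_solution_cvg D_gt0 cop size_fv uniq_zs
  size_zs q_zs (fun j hj => (sconv_Some (cvg_z j hj)).2).
have sp : (size fv.1 <= D.+1)%N by rewrite -size_fv leq_maxl.
have sq : (size fv.2 <= D.+1)%N by rewrite -size_fv leq_maxr.
exists (fun n => row_num (c n)), (fun n => row_den (c n)), k, (maxn N0 Nw); split=> //.
- by rewrite -(row_num_coef_row fv.2 sp) -row_numZ; apply: cvgc_coef_row_num.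
- by rewrite -(row_den_coef_row fv.1 sq) -row_denZ; apply: cvgc_coef_row_den.
move=> n; rewrite geq_max => /andP[nN0 nNw].
apply: homog_map_interp_solution (g_homog n) _ (sol_c n nN0) => j hj.
exact: (hNw (Ordinal hj)).
Qed.

Lemma homog_map_unif_cvg : unif_conv g (ev fv).
Proof.
have [Pn [Qn [k [N [k0 cvgP cvgQ gE]]]]] := homog_map_coef_cvg.
have size_fv : maxn (size fv.1) (size fv.2) = D.+1.
  by rewrite -rdeg_fv maxn_size_rdeg //; case/andP: fv_ratmap.
have sP : (size (k *: fv.1) <= D.+1)%N.
  by rewrite (leq_trans (size_scale_leq _ _)) // -size_fv leq_maxl.
have sQ : (size (k *: fv.2) <= D.+1)%N.
  by rewrite (leq_trans (size_scale_leq _ _)) // -size_fv leq_maxr.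
have fvE x y : (x != 0) || (y != 0) -> ev fv (hpoint x y) =
    hpoint (homog D (k *: fv.1) x y) (homog D (k *: fv.2) x y).
  by move=> xy; rewrite ev_hpoint // rdeg_fv !homogZ hpointZ.
have fv_neq0 x y : (x != 0) || (y != 0) ->
    (homog D (k *: fv.1) x y != 0) || (homog D (k *: fv.2) x y != 0).
  move=> xy; rewrite !homogZ !mulf_eq0 !negb_or k0 /= -rdeg_fv.
  exact: homog_ratmap_neq0.
move=> eps /(homog_unif_cvg sP sQ fv_neq0 cvgP cvgQ)[N' hN'].
exists (maxn N N') => n; rewrite geq_max => /andP[nN nN'] s.
have [x [y [xy <- hxy]]] := hpoint_unit_lift s.
by rewrite gE // fvE //; apply: hN'.
Qed.

End HomogMapLimit.

Lemma loc_unif_conv_off_sconv (R : realType) (A : sphere R -> Prop)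
    (g : nat -> sphere R -> sphere R) (f : sphere R -> sphere R) (s : sphere R) :
  loc_unif_conv_off A g f -> ~ A s -> sconv (fun n => g n s) (f s).
Proof.
move=> cvg_g As eps eps0; have [r r0 /(_ eps eps0)[N hN]] := cvg_g s As.
by exists N => n /hN; apply; rewrite chord_refl.
Qed.

Theorem lemma4p12 (R : realType) (Y IY Z IZ : finType)
    (eY : rel (Y + IY)) (attY : IY -> Y + IY -> sphere R)
    (eZ : rel (Z + IZ)) (attZ : IZ -> Z + IZ -> sphere R)
    (FY : Y -> Z) (FI : IY -> IZ) (fv : IY -> ratmap R) (dY : Y -> nat) (D : nat)
    (f : nat -> ratmap R) (y : nat -> Y -> sphere R) (z : nat -> Z -> sphere R)
    (phiY : nat -> IY -> ratmap R) (phiZ : nat -> IZ -> ratmap R) (v : IY) :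
  is_sphere_tree eY attY -> is_sphere_tree eZ attZ ->
  is_cover eY attY eZ attZ FY FI fv dY D ->
  rdeg (fv v) = D ->
  converges_to eY attY eZ attZ FY FI fv dY D f y z phiY phiZ ->
  unif_conv (fun n s => ev (phiZ n (FI v)) (ev (f n) (ev (mobinv (phiY n v)) s)))
            (ev (fv v)).
Proof.
move=> _ _ [_ fv_ratmap _] rdeg_fv [marked cvg_v].
have [mobY mobZ _ _ loc_cvg] := cvg_v v.
pose L := pmap id [seq attY v u | u <- enum {: Y + IY}].
apply: (homog_map_unif_cvg (L := L) (fv_ratmap v) rdeg_fv) => [n|x xL].
  have [f_ratmap rdeg_f _ _ _] := marked n.
  by rewrite -rdeg_f; apply: homog_map_mobius_conj (mobY n) f_ratmap (mobZ n).
apply: loc_unif_conv_off_sconv loc_cvg _ => -[u _ xu].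
by move: xL; rewrite mem_pmap map_id xu map_f ?mem_enum.
Qed.
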